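(* Fix an integer $k\ge1$, let $\Delta_k:=\log(1/2)/\log(1-2^{-k})$ and fix $\Delta>\Delta_k$. For $n\ge k$ let $m=\lceil\Delta N_k\rceil$ and let the data $(\ell_j,\varepsilon_j)_{j\in[m]}$ be i.i.d., where $\ell_j=(\ell_{j,1},\dots,\ell_{j,k})$ is a uniformly random $k$-tuple of linearly independent linear forms on $\mathbb{F}_2^n$ and $\varepsilon_j\in\mathbb{F}_2^k$ is uniform and independent of $\ell_j$ (so that the flats $V_j=\{x:\ell_{j,i}(x)=\varepsilon_{j,i}\ \forall i\}$ satisfy $V\sim\mathbf{P}_{\text{unif}}$). Then the probability that the linear system $(\mathcal{L}_V)$ has a solution in $\mathbb{F}_2^{N_k}$ tends to $0$ as $n\to\infty$.
   Context: Let $N_k=\sum_{i=0}^k\binom{n}{i}$ and index the coordinates of $\mathbb{F}_2^{N_k}$ by subsets $S\subseteq[n]$ with $|S|\le k$. For linear forms $\ell_1,\dots,\ell_k$ on $\mathbb{F}_2^n$ and $\alpha\in\mathbb{F}_2^k$, expand $P_{\ell,\alpha}(x)=\prod_{i=1}^k(\ell_i(x)+\alpha_i)$ in $\mathbb{F}_2[x_1,\dots,x_n]$ and reduce using $x_s^2=x_s$, obtaining $\sum_{|S|\le k}c_S(\ell,\alpha)\prod_{s\in S}x_s$; define the linear form $\mathcal{L}_{\ell,\alpha}(Y)=\sum_{|S|\le k}c_S(\ell,\alpha)Y_S$ on $\mathbb{F}_2^{N_k}$. Given data $(\ell_j,\varepsilon_j)_{j\in[m]}$ describing flats $V_j$,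 with $\alpha_j:=(1-\varepsilon_{j,i})_{i\in[k]}$, the system $(\mathcal{L}_V)$ is the system of $m+1$ linear equations in $Y\in\mathbb{F}_2^{N_k}$: $\mathcal{L}_{\ell_j,\alpha_j}(Y)=0$ for all $j\in[m]$, and $Y_\emptyset=1$. $\mathbf{P}_{\text{unif}}$ is the law of $m$ i.i.d. uniform affine subspaces of $\mathbb{F}_2^n$ of dimension $n-k$. *)

From HB Require Import structures.
From mathcomp Require Import all_boot all_order all_algebra all_fingroup all_field.
From Stdlib Require Import Reals.
Set Implicit Arguments. Unset Strict Implicit. Unset Printing Implicit Defensive.
Import GRing.Theory.
Local Open Scope ring_scope.

Definition Nk (n k : nat) : nat := \big[addn/0%nat]_(i < k.+1) 'C(n, i).

(* A k-tuple of linear forms on F_2^n is a k x n matrix over F_2 (row i = ell_i);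
   ell_i(x) = sum_s ell_{i,s} x_s. *)

(* Coefficient c_S(ell, alpha) of the monomial prod_{s in S} x_s in the
   expansion of prod_{i<k} (sum_s ell_{i,s} x_s + alpha_i) reduced by x_s^2 = x_s:
   expanding the product amounts to choosing for each factor i either the
   constant alpha_i (None) or a term ell_{i,s} x_s (Some s); the resulting
   monomial after reduction is prod over the set of chosen variables. *)
Definition choice_set (n k : nat) (sg : {ffun 'I_k -> option 'I_n}) : {set 'I_n} :=
  [set s | [exists i, sg i == Some s]].

Definition choice_coef (n k : nat) (l : 'M['F_2]_(k, n)) (alpha : 'rV['F_2]_k)
    (sg : {ffun 'I_k -> option 'I_n}) : 'F_2 :=
  \prod_(i < k) match sg i with None => alpha ord0 i | Some s => l i s end.

Definition coefS (n k : nat) (l : 'M['F_2]_(k, n)) (alpha : 'rV['F_2]_k)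
    (S : {set 'I_n}) : 'F_2 :=
  \sum_(sg : {ffun 'I_k -> option 'I_n} | choice_set sg == S) choice_coef l alpha sg.

(* The linear form L_{ell,alpha}(Y) = sum_{|S| <= k} c_S(ell,alpha) Y_S,
   coordinates of F_2^{N_k} indexed by subsets S of [n] with |S| <= k. *)
Definition Lform (n k : nat) (l : 'M['F_2]_(k, n)) (alpha : 'rV['F_2]_k)
    (Y : {ffun {set 'I_n} -> 'F_2}) : 'F_2 :=
  \sum_(S : {set 'I_n} | leq #|S| k) coefS l alpha S * Y S.

Definition alpha_of (k : nat) (eps : 'rV['F_2]_k) : 'rV['F_2]_k :=
  \row_i (1 - eps ord0 i).

(* The system (L_V) is solvable.  (Coordinates Y_S with |S| > k do not occur
   in any equation, so quantifying over all functions on subsets is the same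
   as quantifying over F_2^{N_k}.) *)
Definition solvable (n k m : nat)
    (d : {ffun 'I_m -> 'M['F_2]_(k, n) * 'rV['F_2]_k}) : bool :=
  [exists Y : {ffun {set 'I_n} -> 'F_2},
     (Y set0 == 1) &&
     [forall j : 'I_m, Lform (d j).1 (alpha_of (d j).2) Y == 0]].

(* Sample space: m i.i.d. pairs (ell_j, eps_j), ell_j uniform among k-tuples of
   linearly independent forms (row_free k x n matrices), eps_j uniform. *)
Definition admissible (n k m : nat)
    (d : {ffun 'I_m -> 'M['F_2]_(k, n) * 'rV['F_2]_k}) : bool :=
  [forall j : 'I_m, row_free (d j).1].

Definition n_total (n k m : nat) : nat :=
  #|[set d : {ffun 'I_m -> 'M['F_2]_(k, n) * 'rV['F_2]_k} | admissible d]|.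

Definition n_solvable (n k m : nat) : nat :=
  #|[set d : {ffun 'I_m -> 'M['F_2]_(k, n) * 'rV['F_2]_k} | admissible d && solvable d]|.

Definition prob_solvable (n k m : nat) : Rdefinitions.R :=
  Rdiv (INR (n_solvable n k m)) (INR (n_total n k m)).

Definition Delta_k (k : nat) : Rdefinitions.R :=
  Rdiv (ln (Rdiv 1 2)) (ln (Rminus 1 (Rinv (pow 2 k)))).

Definition ceilR (x : Rdefinitions.R) : Z := Z.opp (Int_part (Ropp x)).

Definition m_of (Delta : Rdefinitions.R) (n k : nat) : nat :=
  Z.to_nat (ceilR (Rmult Delta (INR (Nk n k)))).

(* Summing L_{l,alpha}(Y) over all alpha in F_2^k gives Y_0, because summed over
   alpha the product prod_i (l_i(x) + alpha_i) collapses to the constant 1.  So for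
   any Y with Y_0 = 1 at least one of the 2^k right-hand sides violates the
   equation, and a uniform random flat is satisfied by Y with probability at most
   1 - 2^-k.  Only the 2^(N_k) cochains supported on sets of size <= k matter, so a
   union bound gives P <= 2^(N_k) (1 - 2^-k)^m <= exp (N_k (ln 2 + Delta ln (1 - 2^-k))),
   whose exponent is negative precisely when Delta > Delta_k; as N_k >= n the
   probability decays geometrically in n. *)

From Stdlib Require Import Reals Lra.
From mathcomp Require Import all_boot all_algebra.
Set Implicit Arguments. Unset Strict Implicit. Unset Printing Implicit Defensive.
Import GRing.Theory.

Section CoefficientSums.
Local Open Scope ring_scope.
Variables n k : nat.
Implicit Types (l : 'M['F_2]_(k, n)) (Y : {ffun {set 'I_n} -> 'F_2}).

Lemma F2_addrr (c : 'F_2) : c + c = 0.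
Proof. by apply: addrr_pchar2; apply: pchar_Fp. Qed.

Lemma sum_F2 (V : nmodType) (f : 'F_2 -> V) : \sum_(a : 'F_2) f a = f 0 + f 1.
Proof.
by rewrite (bigD1 0) //= (bigD1 1) //= big_pred0 ?addr0 // => -[[|[|]] //= a2].
Qed.

(* The sum over alpha factorises over i: a factor with a chosen variable
   contributes [l i s + l i s = 0], a constant factor contributes [0 + 1]. *)
Lemma sum_choice_coef l (sg : {ffun 'I_k -> option 'I_n}) :
  \sum_(alpha : 'rV['F_2]_k) choice_coef l alpha sg = (sg == [ffun => None])%:R.
Proof.
pose G i (a : 'F_2) := if sg i is Some s then l i s else a.
rewrite (reindex (fun f : {ffun 'I_k -> 'F_2} => \row_i f i)) /=; last first.
  exists (fun a : 'rV_k => [ffun i => a ord0 i]) => [f _|a _].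
    by apply/ffunP=> i; rewrite ffunE mxE.
  by apply/rowP => i; rewrite mxE ffunE.
have -> : \sum_(f : {ffun 'I_k -> 'F_2}) choice_coef l (\row_i f i) sg =
          \sum_(f : {ffun 'I_k -> 'F_2}) \prod_i G i (f i).
  apply: eq_bigr => f _; apply: eq_bigr => i _.
  by rewrite /G; case: (sg i) => //; rewrite mxE.
rewrite -(bigA_distr_bigA G); under eq_bigr do rewrite sum_F2 /G.
have [->|nzsg] := eqVneq sg [ffun => None].
  by rewrite big1 // => i _; rewrite ffunE add0r.
have /existsP[i] : [exists i, sg i != None].
  apply: contraNT nzsg; rewrite negb_exists => /forallP allN.
  by apply/eqP/ffunP => i; rewrite ffunE; apply/eqP/negbNE/allN.
case sgi: (sg i) => [s|] // _.
by rewrite (bigD1 i) //= sgi F2_addrr mul0r.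
Qed.

Lemma choice_set_None :
  choice_set ([ffun => None] : {ffun 'I_k -> option 'I_n}) = set0.
Proof. by apply/setP => s; rewrite inE in_set0; apply/existsP => -[i]; rewrite ffunE. Qed.

Lemma sum_coefS l (S : {set 'I_n}) :
  \sum_(alpha : 'rV['F_2]_k) coefS l alpha S = (S == set0)%:R.
Proof.
rewrite /coefS exchange_big /=; under eq_bigr do rewrite sum_choice_coef.
have [->|nzS] := eqVneq S set0.
  rewrite (bigD1 [ffun => None]) /= ?choice_set_None ?eqxx //.
  by rewrite big1 ?addr0 // => sg /andP[_ /negbTE ->].
apply: big1 => sg /eqP sgS; case: eqP => // sgN.
by move: nzS; rewrite -sgS sgN choice_set_None eqxx.
Qed.

Lemma sum_Lform l Y : \sum_(alpha : 'rV['F_2]_k) Lform l alpha Y = Y set0.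
Proof.
rewrite /Lform exchange_big /=; under eq_bigr do rewrite -mulr_suml sum_coefS.
rewrite (bigD1 set0) ?cards0 //= eqxx mul1r big1 ?addr0 // => S /andP[_ /negbTE ->].
by rewrite mul0r.
Qed.

Lemma alpha_ofK : involutive (@alpha_of k).
Proof. by move=> e; apply/rowP => i; rewrite !mxE opprB addrC subrK. Qed.

Lemma exists_Lform_neq0 l Y : Y set0 = 1 -> exists e, Lform l (alpha_of e) Y != 0.
Proof.
move=> Y0; apply/existsP; apply: contraT; rewrite negb_exists => /forallP all0.
have := sum_Lform l Y; rewrite Y0 big1 => [/eqP|a _]; first by rewrite eq_sym oner_eq0.
by apply/eqP; move: (all0 (alpha_of a)); rewrite alpha_ofK negbK.
Qed.

End CoefficientSums.

Lemma card_bigcup_le (I T : finType) (P : pred I) (F : I -> {set T}) :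
  #|\bigcup_(i | P i) F i| <= \sum_(i | P i) #|F i|.
Proof.
elim/big_rec2: _ => [|i c U _ leUc]; first by rewrite cards0.
by rewrite (leq_trans (leq_card_setU _ _).1) ?leq_add2l.
Qed.

Lemma card_ffun_forall_in (I T : finType) (A : {set T}) :
  #|[set d : {ffun I -> T} | [forall j, d j \in A]]| = #|A| ^ #|I|.
Proof.
rewrite -card_ffun_on; apply: eq_card => d; rewrite inE.
exact/forallP/ffun_onP.
Qed.

Lemma card_fibres (T1 T2 : finType) (A : {set T1 * T2}) :
  #|A| = \sum_(a : T1) #|[set b | (a, b) \in A]|.
Proof.
rewrite -sum1_card; under [RHS]eq_bigr do rewrite -sum1dep_card.
by rewrite pair_big_dep; apply: eq_bigl => -[].
Qed.

Lemma sum_ord_eq (x k : nat) : \sum_(i < k.+1) (x == i : nat) = (x <= k : nat).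
Proof.
case: (ltnP x k.+1) => [ltxk|ltkx].
  rewrite (bigD1 (Ordinal ltxk)) //= eqxx big1 => [|i]; first by rewrite -ltnS ltxk.
  by move=> ne; case: eqP => // xi; case/eqP: ne; apply: val_inj.
rewrite big1 => [|i _]; first by rewrite leqNgt ltkx.
by case: eqP => // xi; move: (ltn_ord i); rewrite -xi ltnNge ltkx.
Qed.

Lemma card_small_subsets (T : finType) (k : nat) :
  #|[set S : {set T} | #|S| <= k]| = \sum_(i < k.+1) 'C(#|T|, i).
Proof.
rewrite -sum1dep_card (big_mkcond (fun S => _ <= k)) /=.
under eq_bigr do rewrite -[if _ then _ else _]/(nat_of_bool _) -sum_ord_eq.
rewrite exchange_big /=; apply: eq_bigr => i _.
rewrite -card_draws -sum1dep_card [RHS]big_mkcond.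
by apply: eq_bigr => S _; case: (_ == _).
Qed.

Section Counting.
Variables n k : nat.
Notation flat := ('M['F_2]_(k, n) * 'rV['F_2]_k)%type.
Notation cochain := {ffun {set 'I_n} -> 'F_2}.
Implicit Types (l : 'M['F_2]_(k, n)) (Y : cochain).

Definition free_flats : {set flat} := [set x | row_free x.1].

Definition sat_flats Y : {set flat} :=
  [set x in free_flats | Lform x.1 (alpha_of x.2) Y == 0%R].

Lemma card_rV_F2 : #|{: 'rV['F_2]_k}| = 2 ^ k.
Proof. by rewrite card_mx card_Fp // mul1n. Qed.

Lemma card_Lform_eq0_lt l Y : Y set0 = 1%R ->
  #|[set e : 'rV_k | Lform l (alpha_of e) Y == 0%R]| < 2 ^ k.
Proof.
move=> Y0; have [e0 Le0] := exists_Lform_neq0 l Y0.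
rewrite -card_rV_F2; apply: proper_card; apply/properP; split; first exact: subset_predT.
by exists e0; rewrite // inE (negbTE Le0).
Qed.

Lemma card_sat_flats Y : Y set0 = 1%R ->
  2 ^ k * #|sat_flats Y| <= (2 ^ k).-1 * #|free_flats|.
Proof.
move=> Y0; rewrite [#|sat_flats Y|]card_fibres [#|free_flats|]card_fibres.
rewrite !big_distrr /=.
apply: leq_sum => l _; have [freel|nfreel] := boolP (row_free l).
  have -> : [set e | (l, e) \in free_flats] = setT by apply/setP => e; rewrite !inE freel.
  have -> : [set e | (l, e) \in sat_flats Y] =
            [set e : 'rV_k | Lform l (alpha_of e) Y == 0%R].
    by apply/setP => e; rewrite !inE freel.
  have ltY := card_Lform_eq0_lt l Y0.
  by rewrite cardsT card_rV_F2 mulnC leq_pmul2r ?expn_gt0 // -ltnS (ltn_predK ltY).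
have -> : [set e | (l, e) \in sat_flats Y] = set0.
  by apply/setP => e; rewrite !inE (negbTE nfreel).
by rewrite cards0 muln0.
Qed.

Definition low_degree : {set cochain} :=
  [set Y : cochain | [forall S : {set 'I_n}, (k < #|S|) ==> (Y S == 0%R)]].

Lemma card_low_degree : #|low_degree| = 2 ^ Nk n k.
Proof.
have -> : low_degree =
    [set Y in pffun_on 0%R [set S : {set 'I_n} | #|S| <= k] (@predT 'F_2)].
  apply/setP => Y; rewrite !inE; apply/forallP/pffun_onP => [Yk|[Yk _] S].
    split=> [|//]; apply/subsetP => S; rewrite !inE leqNgt.
    by apply: contra => ltkS; apply: implyP (Yk S) _.
  apply/implyP => ltkS; apply: contraTT ltkS => YS.
  by move/subsetP: Yk => /(_ S); rewrite !inE -leqNgt; apply.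
by rewrite cardsE card_pffun_on card_Fp // card_small_subsets card_ord.
Qed.

Definition truncate Y : cochain := [ffun S : {set 'I_n} => if #|S| <= k then Y S else 0%R].

Lemma truncate_low_degree Y : truncate Y \in low_degree.
Proof.
by rewrite inE; apply/forallP => S; rewrite ffunE ltnNge; case: (#|S| <= k); rewrite /= ?eqxx.
Qed.

Lemma truncate_set0 Y : truncate Y set0 = Y set0.
Proof. by rewrite ffunE cards0. Qed.

Lemma Lform_truncate l a Y : Lform l a (truncate Y) = Lform l a Y.
Proof. by apply: eq_bigr => S leSk; rewrite ffunE leSk. Qed.

Variable m : nat.
Notation data := {ffun 'I_m -> flat}.

Definition sat_data Y : {set data} := [set d : data | [forall j, d j \in sat_flats Y]].

Lemma solvable_subset_bigcup :
  [set d : data | admissible d && solvable d] \subset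
  \bigcup_(Y in low_degree | Y set0 == 1%R) sat_data Y.
Proof.
apply/subsetP => d; rewrite inE => /andP[/forallP freed /existsP[Y /andP[/eqP Y0 /forallP Yd]]].
apply/bigcupP; exists (truncate Y); first by rewrite truncate_low_degree truncate_set0 Y0 /=.
by rewrite inE; apply/forallP => j; rewrite !inE Lform_truncate freed Yd.
Qed.

Lemma n_totalE : n_total n k m = #|free_flats| ^ m.
Proof.
rewrite /n_total -[in RHS](card_ord m) -card_ffun_forall_in.
by apply: eq_card => d; rewrite !inE; apply: eq_forallb => j; rewrite inE.
Qed.

Lemma count_solvable :
  (2 ^ k) ^ m * n_solvable n k m <= 2 ^ Nk n k * (2 ^ k).-1 ^ m * n_total n k m.
Proof.
have union_bound := leq_trans (subset_leq_card solvable_subset_bigcup) (card_bigcup_le _ _).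
apply: leq_trans (leq_mul (leqnn _) union_bound) _; rewrite big_distrr /=.
apply: (@leq_trans (\sum_(Y in low_degree | Y set0 == 1%R) (2 ^ k).-1 ^ m * n_total n k m)).
  apply: leq_sum => Y /andP[_ /eqP Y0].
  rewrite card_ffun_forall_in card_ord n_totalE -!expnMn.
  have [->|m_gt0] := posnP m; first by rewrite !expn0.
  by rewrite leq_exp2r // card_sat_flats.
rewrite sum_nat_const mulnA !leq_mul2r -card_low_degree subset_leq_card ?orbT //.
by apply/subsetP => Y /andP[].
Qed.

End Counting.

Section Asymptotics.
Local Open Scope R_scope.

Lemma INR_expn (a b : nat) : INR (a ^ b)%N = INR a ^ b.
Proof. by elim: b => [|b IHb] //; rewrite expnS mulnE mult_INR IHb. Qed.

Lemma INR_predn (a : nat) : (0 < a)%N -> INR a.-1 = INR a - 1.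
Proof. by case: a => // a _; rewrite S_INR /=; lra. Qed.

Lemma leq_Nk (n k : nat) : (1 <= k)%N -> (n <= Nk n k)%N.
Proof.
case: k => // k _; rewrite /Nk big_ord_recl big_ord_recl /= bin1.
by rewrite addnCA leq_addr.
Qed.

Lemma m_of_ge (Delta : R) (n k : nat) : Delta * INR (Nk n k) <= INR (m_of Delta n k).
Proof.
rewrite /m_of /ceilR; set x := Delta * INR (Nk n k).
have [le_int _] := base_Int_part (- x).
set z := Z.opp (Int_part (- x)).
have le_ceil : x <= IZR z by rewrite opp_IZR; lra.
have [z_lt0|z_ge0] := ZArith_dec.Z_lt_le_dec z 0.
  have := IZR_lt _ _ z_lt0; have := pos_INR (Z.to_nat z); lra.
by rewrite INR_IZR_INZ Znat.Z2Nat.id.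
Qed.

Lemma prob_solvable_ge0 (n k m : nat) : 0 <= prob_solvable n k m.
Proof.
rewrite /prob_solvable /Rdiv; apply: Rmult_le_pos; first exact: pos_INR.
case: (n_total n k m) => [|t]; first by rewrite Rinv_0; apply: Rle_refl.
exact/Rlt_le/Rinv_0_lt_compat/lt_0_INR/ltP.
Qed.

Lemma prob_solvable_le (n k m : nat) :
  prob_solvable n k m <= 2 ^ Nk n k * (1 - / 2 ^ k) ^ m.
Proof.
have X_gt0 : 0 < 2 ^ k by apply: pow_lt; lra.
have count := le_INR _ _ (elimT leP (count_solvable n k m)).
rewrite !mulnE !mult_INR !INR_expn INR_predn ?expn_gt0 // INR_expn /= in count.
rewrite (_ : 1 + 1 = 2) in count; last by lra.
rewrite /prob_solvable; set ns := INR _ in count *; set nt := INR _ in count *.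
have [nt0|nt_neq0] := Req_dec nt 0.
  rewrite nt0 /Rdiv Rinv_0 Rmult_0_r; apply: Rmult_le_pos; apply: pow_le; first lra.
  have := Rinv_le_contravar _ _ Rlt_0_1 (pow_R1_Rle 2 k ltac:(lra)); lra.
have nt_gt0 : 0 < nt by have := pos_INR (n_total n k m); rewrite -/nt; lra.
rewrite (_ : 1 - / 2 ^ k = (2 ^ k - 1) / 2 ^ k); last by field; lra.
rewrite /Rdiv Rpow_mult_distr pow_inv.
apply: (Rmult_le_reg_l ((2 ^ k) ^ m * nt)).
  by apply: Rmult_lt_0_compat => //; apply: pow_lt.
apply: (Rle_trans _ _ _ (_ : _ <= (2 ^ k) ^ m * ns)).
  by right; field; lra.
apply: (Rle_trans _ _ _ count); right; field; apply: pow_nonzero; lra.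
Qed.

Definition rate (k : nat) (Delta : R) : R := ln 2 + Delta * ln (1 - / 2 ^ k).

Lemma one_sub_inv_pow2_bounds (k : nat) : (1 <= k)%N -> 0 < 1 - / 2 ^ k < 1.
Proof.
move=> k_gt0; have inv_gt0 : 0 < / 2 ^ k by apply/Rinv_0_lt_compat/pow_lt; lra.
suff : / 2 ^ k <= / 2 by lra.
apply: Rinv_le_contravar; first lra.
by case: k k_gt0 {inv_gt0} => // k _ /=; have := pow_R1_Rle 2 k; lra.
Qed.

Lemma rate_lt0 (k : nat) (Delta : R) : (1 <= k)%N -> Delta_k k < Delta -> rate k Delta < 0.
Proof.
rewrite /rate => k_gt0 ltD; have [p_gt0 p_lt1] := one_sub_inv_pow2_bounds k_gt0.
set p := 1 - / 2 ^ k in p_gt0 p_lt1 *.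
have ln_p_lt0 : ln p < 0 by rewrite -ln_1; apply: ln_increasing.
have Dk : Delta_k k = - ln 2 / ln p by rewrite /Delta_k /Rdiv Rmult_1_l ln_Rinv //; lra.
have := Rmult_lt_gt_compat_neg_l _ _ _ ln_p_lt0 ltD.
have -> : ln p * Delta_k k = - ln 2 by rewrite Dk; field; lra.
lra.
Qed.

Lemma prob_solvable_m_of_le (k : nat) (Delta : R) (n : nat) : (1 <= k)%N ->
  rate k Delta < 0 -> prob_solvable n k (m_of Delta n k) <= exp (rate k Delta) ^ n.
Proof.
move=> k_gt0 neg_rate; have [p_gt0 p_lt1] := one_sub_inv_pow2_bounds k_gt0.
set p := 1 - / 2 ^ k in p_gt0 p_lt1 *.
have ln_p_lt0 : ln p < 0 by rewrite -ln_1; apply: ln_increasing.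
apply: Rle_trans (prob_solvable_le n k _) _; rewrite -/p.
rewrite -(Rpower_pow _ _ Rlt_0_2) -(Rpower_pow _ _ p_gt0) -(Rpower_pow _ _ (exp_pos _)).
rewrite /Rpower ln_exp -exp_plus.
suff : INR (Nk n k) * ln 2 + INR (m_of Delta n k) * ln p <= INR n * rate k Delta.
  by case=> [lt|->]; [left; apply: exp_increasing | right].
have le_m := m_of_ge Delta n k.
have le_n : INR n <= INR (Nk n k) by apply/le_INR/leP/leq_Nk.
rewrite /rate -/p in neg_rate *; nra.
Qed.

Lemma prob_solvable_geometric (k : nat) (Delta : R) :
  (1 <= k)%N -> Delta_k k < Delta ->
  exists2 q, 0 <= q < 1 & forall n, prob_solvable n k (m_of Delta n k) <= q ^ n.
Proof.
move=> k_gt0 ltD; have neg_rate := rate_lt0 k_gt0 ltD.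
exists (exp (rate k Delta)); last by move=> n; exact: prob_solvable_m_of_le.
split; first exact/Rlt_le/exp_pos.
by rewrite -[X in _ < X]exp_0; apply: exp_increasing.
Qed.

Lemma Un_cv_geometric_bound (u : nat -> R) (q : R) :
  0 <= q < 1 -> (forall n, 0 <= u n <= q ^ n) -> Un_cv u 0.
Proof.
move=> [q_ge0 q_lt1] u_bound eps eps_gt0.
have [|N qN_small] := pow_lt_1_zero q _ eps eps_gt0; first by rewrite Rabs_pos_eq.
exists N => n le_Nn; have [u_ge0 u_le] := u_bound n.
rewrite /R_dist Rminus_0_r Rabs_pos_eq //; apply: Rle_lt_trans u_le _.
by have := qN_small n le_Nn; rewrite Rabs_pos_eq //; apply: pow_le.
Qed.

End Asymptotics.

(* MathComp rebinds the delimiter [%R] to [ring_scope]; re-importing [Reals]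
   makes it denote [R_scope] again, as in the statement. *)
From Stdlib Require Import Reals.

Theorem mainTheorem7 (k : nat) (Delta : R) :
  (1 <= k)%N ->
  Rlt (Delta_k k) Delta ->
  Un_cv (fun n : nat => prob_solvable n k (m_of Delta n k)) 0%R.
Proof.
move=> k_gt0 ltD; have [q q_range prob_le] := prob_solvable_geometric k_gt0 ltD.
apply: (Un_cv_geometric_bound q_range) => n.
by split; [exact: prob_solvable_ge0 | exact: prob_le].
Qed.
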